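(* Let $\Omega$ be a compact metric space, $T:\Omega\to\Omega$ a homeomorphism, $\mathcal{H}$ a proper unique visibility Gromov hyperbolic space which is strongly hyperbolic of parameter $\varepsilon>0$ with respect to a base point $p\in\mathcal{H}$, and $A:\Omega\to\mathrm{Isom}(\mathcal{H})$ continuous for the topology of uniform convergence on bounded sets. Let $\alpha:\Omega\to\partial\mathcal{H}$ be a continuous section with $A^*(\omega)\cdot\alpha(\omega)=\alpha(T\omega)$ for all $\omega$, and define $\phi(\omega)=-b_{p,\alpha(T\omega)}(A(\omega)\cdot p)$. If $(T,A)$ is $\tau$-H\''older and $\alpha$ is $\tau$-H\''older with respect to the metric $\varrho_\varepsilon$ on $\partial\mathcal{H}$ (i.e. $\varrho_\varepsilon(\alpha(\omega_1),\alpha(\omega_2))\le C d_\Omega(\omega_1,\omega_2)^\tau$ for some $C$), then $\phi$ is $\tau$-H\''older.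
   Context: Gromov product: $(x,y)_p=\tfrac12\big(d_{\mathcal{H}}(x,p)+d_{\mathcal{H}}(y,p)-d_{\mathcal{H}}(x,y)\big)$ for $x,y\in\mathcal{H}$; $\varrho_\varepsilon(x,y)=e^{-\varepsilon(x,y)_p}$. $\mathcal{H}$ is strongly hyperbolic of parameter $\varepsilon$ if $\varrho_\varepsilon(x,y)\le\varrho_\varepsilon(x,z)+\varrho_\varepsilon(y,z)$ for all $x,y,z\in\mathcal{H}$. In that case the Gromov product extends continuously to $\mathcal{H}\cup\partial\mathcal{H}$ via $(x,y)_p=\lim_i(x_i,y_i)_p$ for $x_i\to x$, $y_i\to y$ (independent of the sequences), and $\varrho_\varepsilon(x,y)=e^{-\varepsilon(x,y)_p}$ is a metric on $\partial\mathcal{H}$. A proper unique geodesic space is Gromov hyperbolic if geodesic triangles are $\delta$-slim for some $\delta$; $\partial\mathcal{H}$ is the set of classes of geodesic rays at bounded distance; unique visibility means any two distinct boundary points are ends of a unique bi-infinite geodesic. An isometry $A$ induces $A^*[\gamma]=[A\circ\gamma]$ on $\partial\mathcal{H}$. Busemann function: $b_{p,\alpha}(h)=\lim_n\big(d_{\mathcal{H}}(x_n,h)-d_{\mathcal{H}}(x_n,p)\big)$ for $x_n\to\alpha$. Continuity of $A$ for uniform convergence on bounded sets: for every bounded $K$, $\omega_0$, $\eta>0$ there is $\delta>0$ with $d_{\mathcal{H}}(A(\omega)h,A(\omega_0)h)<\eta$ for $h\in K$ when $d_\Omega(\omega,\omega_0)<\delta$. $(T,A)$ is $\tau$-H\''older: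 for every bounded $K\subset\mathcal{H}$ there is $C_K$ with $d_{\mathcal{H}}(A(\omega_1)h,A(\omega_2)h)\le C_K d_\Omega(\omega_1,\omega_2)^\tau$ for $h\in K$. *)

From Stdlib Require Import Reals Lra List.
Open Scope R_scope.

Section MetricDefs.
Context {X : Type} (d : X -> X -> R).

Definition is_metric : Prop :=
  (forall x y, 0 <= d x y) /\ (forall x y, d x y = 0 <-> x = y) /\
  (forall x y, d x y = d y x) /\ (forall x y z, d x z <= d x y + d y z).

Definition open_in (U : X -> Prop) : Prop :=
  forall x, U x -> exists r, 0 < r /\ forall y, d x y < r -> U y.

Definition compact_set (K : X -> Prop) : Prop :=
  forall (I : Type) (U : I -> X -> Prop),
    (forall i, open_in (U i)) -> (forall x, K x -> exists i, U i x) ->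
    exists l : list I, forall x, K x -> exists i, In i l /\ U i x.

Definition compact_space : Prop := compact_set (fun _ => True).

Definition proper_space : Prop :=
  forall x r, compact_set (fun y => d x y <= r).

Definition bounded_set (K : X -> Prop) : Prop :=
  exists x0 r, forall h, K h -> d x0 h <= r.

Definition geod_segment (x y : X) (g : R -> X) : Prop :=
  g 0 = x /\ g (d x y) = y /\
  forall s t, 0 <= s <= d x y -> 0 <= t <= d x y -> d (g s) (g t) = Rabs (s - t).

Definition unique_geodesic_space : Prop :=
  forall x y, (exists g, geod_segment x y g) /\
    forall g1 g2, geod_segment x y g1 -> geod_segment x y g2 ->
      forall s, 0 <= s <= d x y -> g1 s = g2 s.

Definition slim_triangles (delta : R) : Prop :=
  forall x y z g1 g2 g3, geod_segment x y g1 -> geod_segment y z g2 ->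
    geod_segment z x g3 ->
    forall s, 0 <= s <= d x y ->
      (exists t, 0 <= t <= d y z /\ d (g1 s) (g2 t) <= delta) \/
      (exists t, 0 <= t <= d z x /\ d (g1 s) (g3 t) <= delta).

Definition gromov_hyperbolic : Prop :=
  exists delta, 0 <= delta /\ slim_triangles delta.

Definition is_ray (g : R -> X) : Prop :=
  forall s t, 0 <= s -> 0 <= t -> d (g s) (g t) = Rabs (s - t).

Definition ray_equiv (g1 g2 : R -> X) : Prop :=
  exists K, forall t, 0 <= t -> d (g1 t) (g2 t) <= K.

(** a boundary point = an equivalence class of geodesic rays *)
Definition bd_class (C : (R -> X) -> Prop) : Prop :=
  exists g, is_ray g /\ forall g', C g' <-> (is_ray g' /\ ray_equiv g g').

Definition bdry : Type := { C : (R -> X) -> Prop | bd_class C }.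

Definition bi_geodesic (c : R -> X) : Prop :=
  forall s t, d (c s) (c t) = Rabs (s - t).

Definition joins (c : R -> X) (xi eta : bdry) : Prop :=
  bi_geodesic c /\ proj1_sig xi (fun t => c t) /\ proj1_sig eta (fun t => c (- t)).

Definition unique_visibility : Prop :=
  forall xi eta : bdry, xi <> eta ->
    (exists c, joins c xi eta) /\
    forall c1 c2, joins c1 xi eta -> joins c2 xi eta ->
      forall t, exists s, c2 s = c1 t.

Definition gprod (p x y : X) : R := (d x p + d y p - d x y) / 2.

Definition rho (eps : R) (p x y : X) : R := exp (- eps * gprod p x y).

Definition strongly_hyperbolic (eps : R) (p : X) : Prop :=
  forall x y z, rho eps p x y <= rho eps p x z + rho eps p y z.

Definition conv_bd (p : X) (x : nat -> X) (xi : bdry) : Prop :=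
  exists g, proj1_sig xi g /\
    forall M, exists N, forall n m, (N <= n)%nat -> (N <= m)%nat ->
      M <= gprod p (x n) (g (INR m)).

(** rho_eps extended to the boundary: r is the value of rho_eps(xi,eta) *)
Definition rho_bd (eps : R) (p : X) (xi eta : bdry) (r : R) : Prop :=
  forall x y, conv_bd p x xi -> conv_bd p y eta ->
    Un_cv (fun n => rho eps p (x n) (y n)) r.

(** Busemann function: b is the value of b_{p,xi}(h) *)
Definition busemann (p : X) (xi : bdry) (h : X) (b : R) : Prop :=
  forall x, conv_bd p x xi -> Un_cv (fun n => d (x n) h - d (x n) p) b.

Definition is_isometry (f : X -> X) : Prop :=
  (forall x y, d (f x) (f y) = d x y) /\ (forall y, exists x, f x = y).

Definition bd_act (f : X -> X) (xi eta : bdry) : Prop :=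
  forall g, proj1_sig xi g -> proj1_sig eta (fun t => f (g t)).

End MetricDefs.

Definition continuous_map {Y Z : Type} (dY : Y -> Y -> R) (dZ : Z -> Z -> R)
  (f : Y -> Z) : Prop :=
  forall y0 e, 0 < e -> exists del, 0 < del /\
    forall y, dY y y0 < del -> dZ (f y) (f y0) < e.

Definition homeomorphism {Y : Type} (dY : Y -> Y -> R) (T : Y -> Y) : Prop :=
  exists Tinv, (forall y, Tinv (T y) = y) /\ (forall y, T (Tinv y) = y) /\
    continuous_map dY dY T /\ continuous_map dY dY Tinv.

(** x^tau with the convention 0^tau = 0 (tau > 0) *)
Definition hpow (x tau : R) : R :=
  if Req_EM_T x 0 then 0 else Rpower x tau.

Definition isom_cont_unif_bdd {O H : Type} (dO : O -> O -> R) (dH : H -> H -> R)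
  (A : O -> H -> H) : Prop :=
  forall K : H -> Prop, bounded_set dH K -> forall o0 eta, 0 < eta ->
    exists del, 0 < del /\ forall o, dO o o0 < del ->
      forall h, K h -> dH (A o h) (A o0 h) < eta.

Definition cocycle_holder {O H : Type} (dO : O -> O -> R) (dH : H -> H -> R)
  (A : O -> H -> H) (tau : R) : Prop :=
  forall K : H -> Prop, bounded_set dH K -> exists C,
    forall o1 o2 h, K h -> dH (A o1 h) (A o2 h) <= C * hpow (dO o1 o2) tau.

Definition bd_continuous {O H : Type} (dO : O -> O -> R) (dH : H -> H -> R)
  (eps : R) (p : H) (al : O -> bdry dH) : Prop :=
  forall o0 e, 0 < e -> exists del, 0 < del /\ forall o, dO o o0 < del ->
    forall r, rho_bd dH eps p (al o) (al o0) r -> r < e.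

Definition bd_holder {O H : Type} (dO : O -> O -> R) (dH : H -> H -> R)
  (eps : R) (p : H) (al : O -> bdry dH) (tau : R) : Prop :=
  exists C, forall o1 o2 r, rho_bd dH eps p (al o1) (al o2) r ->
    r <= C * hpow (dO o1 o2) tau.

Definition real_holder {O : Type} (dO : O -> O -> R) (f : O -> R) (tau : R) : Prop :=
  exists C, forall o1 o2, Rabs (f o1 - f o2) <= C * hpow (dO o1 o2) tau.

From Stdlib Require Import Reals Lra Lia List.
Open Scope R_scope.

(* Pulling the Busemann function back along [A(ω)], one gets
   [-φ(ω) = lim (d(g_n, p) - d(g_n, z_ω))] for a ray [g] in the class [α(ω)] and
   [z_ω = A(ω)⁻¹ p].  By compactness the points [z_ω] stay in a fixed ball of
   radius [R] around [p], so moving the base point from [z_ω₁] to [z_ω₂] costs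
   [d(z_ω₁, z_ω₂) <= C d_Ω(ω₁, ω₂)^τ] by the Hölder property of [A].  Moving the
   ray from [α(ω₁)] to [α(ω₂)] costs at most [2 e^(εR)/ε · ϱ_ε(α(ω₁), α(ω₂))]:
   strong hyperbolicity gives [e^(-ε(x·z)) <= ϱ_ε(x, y) + e^(-ε(y·z))], and the
   logarithm is [e^(εR)]-Lipschitz on [[e^(-εR), ∞)]. *)

Lemma exp_le_compat x y : x <= y -> exp x <= exp y.
Proof.
  intros Hxy; destruct (Rle_lt_or_eq_dec _ _ Hxy) as [Hlt | ->].
  - left; apply exp_increasing, Hlt.
  - apply Rle_refl.
Qed.

Lemma exp_neg_mul_lt eps e : 0 < eps -> 0 < e ->
  exists M, forall G, M <= G -> exp (- eps * G) < e.
Proof.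
  intros Heps He; exists ((1 - ln e) / eps); intros G HG.
  rewrite <- (exp_ln e He); apply exp_increasing.
  assert (eps * ((1 - ln e) / eps) = 1 - ln e) by (field; lra).
  nra.
Qed.

Lemma sub_le_of_exp_neg_le u v r : 0 <= r -> exp (- u) <= r + exp (- v) ->
  v - u <= r * exp v.
Proof.
  intros Hr Huv.
  assert (Hsplit : exp (- u) = exp (- v) * exp (v - u))
    by (rewrite <- exp_plus; f_equal; ring).
  assert (Hinv : exp v * exp (- v) = 1)
    by (rewrite <- exp_plus, Rplus_opp_r; apply exp_0).
  pose proof (exp_ineq1_le (v - u)); pose proof (exp_pos (- v)); pose proof (exp_pos v).
  assert (Hlin : exp (- v) * (v - u) <= r) by nra.
  replace (v - u) with (exp v * (exp (- v) * (v - u)))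
    by (rewrite <- Rmult_assoc, Hinv; ring).
  rewrite (Rmult_comm r); apply Rmult_le_compat_l; lra.
Qed.

Lemma Un_cv_const c : Un_cv (fun _ => c) c.
Proof.
  intros e He; exists 0%nat; intros n _.
  unfold Rdist; rewrite Rminus_diag, Rabs_R0; exact He.
Qed.

Lemma Rabs_le_cv_lim (u v : nat -> R) a b :
  (forall n, Rabs (u n) <= v n) -> Un_cv u a -> Un_cv v b -> Rabs a <= b.
Proof.
  intros Huv Hu Hv; exact (Rle_cv_lim Huv (cv_cvabs _ _ Hu) Hv).
Qed.

Section Metric.
Context {X : Type} (d : X -> X -> R) (Hd : is_metric d).

Lemma dist_refl x : d x x = 0.
Proof. apply Hd; reflexivity. Qed.

Lemma dist_sym x y : d x y = d y x.
Proof. apply Hd. Qed.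

Lemma dist_triangle x y z : d x z <= d x y + d y z.
Proof. apply Hd. Qed.

Lemma bdry_ray (xi : bdry d) g : proj1_sig xi g -> is_ray d g.
Proof. destruct xi as [C [g0 [Hg0 Hclass]]]; simpl; intros Hg; apply Hclass in Hg; tauto. Qed.

Lemma bdry_inhabited (xi : bdry d) : exists g, proj1_sig xi g.
Proof.
  destruct xi as [C [g0 [Hg0 Hclass]]]; exists g0; apply Hclass.
  split; [exact Hg0|]; exists 0; intros t _; rewrite dist_refl; apply Rle_refl.
Qed.

Lemma bdry_ray_equiv (xi : bdry d) g g' :
  proj1_sig xi g -> proj1_sig xi g' -> ray_equiv d g g'.
Proof.
  destruct xi as [C [g0 [Hg0 Hclass]]]; simpl; intros Hg Hg'.
  apply Hclass in Hg as [_ [K HK]]; apply Hclass in Hg' as [_ [K' HK']].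
  exists (K + K'); intros t Ht.
  pose proof (dist_triangle (g t) (g0 t) (g' t)) as Htri.
  rewrite (dist_sym (g t) (g0 t)) in Htri; specialize (HK t Ht); specialize (HK' t Ht); lra.
Qed.

Section BasePoint.
Context (p : X).

Lemma gprod_le_dist x z : gprod d p x z <= d z p.
Proof. unfold gprod; pose proof (dist_triangle x z p); lra. Qed.

Lemma ray_dist_ge g t : is_ray d g -> 0 <= t -> t - d (g 0) p <= d (g t) p.
Proof.
  intros Hg Ht; pose proof (Hg t 0 Ht (Rle_refl 0)) as Hgt.
  rewrite Rminus_0_r, Rabs_right in Hgt by lra.
  pose proof (dist_triangle (g t) p (g 0)) as Htri; rewrite (dist_sym p) in Htri; lra.
Qed.

Lemma ray_conv_bd (xi : bdry d) g : proj1_sig xi g -> conv_bd d p (fun n => g (INR n)) xi.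
Proof.
  intros Hg; pose proof (bdry_ray xi g Hg) as Hray.
  exists g; split; [exact Hg|]; intros M.
  destruct (INR_unbounded (M + d (g 0) p)) as [N HN]; exists N; intros n m Hn Hm.
  apply le_INR in Hn; apply le_INR in Hm.
  pose proof (ray_dist_ge g (INR n) Hray (pos_INR n)).
  pose proof (ray_dist_ge g (INR m) Hray (pos_INR m)).
  unfold gprod; rewrite (Hray (INR n) (INR m) (pos_INR n) (pos_INR m)).
  unfold Rabs; destruct Rcase_abs; lra.
Qed.

Lemma busemann_pullback f z (xi eta : bdry d) g b :
  is_isometry d f -> f z = p -> bd_act d f xi eta -> proj1_sig xi g ->
  busemann d p eta (f p) b ->
  Un_cv (fun n => d (g (INR n)) p - d (g (INR n)) z) b.
Proof.
  intros [Hf _] Hz Hact Hg Hbus e He.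
  destruct (Hbus _ (ray_conv_bd eta _ (Hact g Hg)) e He) as [N HN].
  exists N; intros n Hn; specialize (HN n Hn); simpl in HN.
  rewrite <- Hz in HN at 2; rewrite !Hf in HN; exact HN.
Qed.

Section StronglyHyperbolic.
Context (eps : R) (Heps : 0 < eps) (Hs : strongly_hyperbolic d eps p).

Lemma rho_sym x y : rho d eps p x y = rho d eps p y x.
Proof. unfold rho, gprod; rewrite (dist_sym x y), (Rplus_comm (d x p)); reflexivity. Qed.

Lemma rho_sub_le a b a' b' :
  Rabs (rho d eps p a b - rho d eps p a' b') <= rho d eps p a a' + rho d eps p b b'.
Proof.
  pose proof (Hs a b a'); pose proof (Hs a' b b'); pose proof (Hs a' b' a); pose proof (Hs a b' b).
  pose proof (rho_sym b a'); pose proof (rho_sym b' a);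
  pose proof (rho_sym a' a); pose proof (rho_sym b' b).
  apply Rabs_le; lra.
Qed.

Lemma gprod_sub_le x y z Rb : d z p <= Rb ->
  gprod d p x z - gprod d p y z <= exp (eps * Rb) / eps * rho d eps p x y.
Proof.
  intros Hz.
  assert (Hexp : exp (- (eps * gprod d p y z)) <=
                 rho d eps p x y + exp (- (eps * gprod d p x z))).
  { pose proof (Hs y z x) as Htri; rewrite (rho_sym z x), (rho_sym y x) in Htri.
    unfold rho at 1 3 in Htri; rewrite !Ropp_mult_distr_l; exact Htri. }
  apply sub_le_of_exp_neg_le in Hexp; [|apply Rlt_le, exp_pos].
  assert (Hbound : exp (eps * gprod d p x z) <= exp (eps * Rb)).
  { apply exp_le_compat, Rmult_le_compat_l; [lra|].
    eapply Rle_trans; [apply gprod_le_dist | exact Hz]. }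
  assert (Hrho : 0 < rho d eps p x y) by apply exp_pos.
  apply (Rmult_le_reg_l eps); [exact Heps|].
  replace (eps * (exp (eps * Rb) / eps * rho d eps p x y))
    with (rho d eps p x y * exp (eps * Rb)) by (field; lra).
  nra.
Qed.

Lemma busemann_term_sub_le a b z1 z2 Rb : d z2 p <= Rb ->
  Rabs ((d a p - d a z1) - (d b p - d b z2)) <=
  d z1 z2 + 2 * exp (eps * Rb) / eps * rho d eps p a b.
Proof.
  intros Hz2.
  pose proof (gprod_sub_le a b z2 Rb Hz2) as Hab; pose proof (gprod_sub_le b a z2 Rb Hz2) as Hba.
  rewrite (rho_sym b a) in Hba; unfold gprod in Hab, Hba.
  pose proof (dist_triangle a z1 z2); pose proof (dist_triangle a z2 z1) as Hz21.
  rewrite (dist_sym z2 z1) in Hz21.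
  apply Rabs_le; split; unfold Rdiv in *; lra.
Qed.

Lemma conv_bd_rho_small (xi : bdry d) x x' :
  conv_bd d p x xi -> conv_bd d p x' xi ->
  forall e, 0 < e -> exists N, forall n m, (N <= n)%nat -> (N <= m)%nat ->
    rho d eps p (x n) (x' m) < e.
Proof.
  intros [g [Hg Hx]] [g' [Hg' Hx']] e He.
  destruct (bdry_ray_equiv xi g g' Hg Hg') as [K HK].
  destruct (exp_neg_mul_lt eps (e / 3) Heps) as [M HM]; [lra|].
  destruct (Hx M) as [N HN]; destruct (Hx' M) as [N' HN'].
  destruct (INR_unbounded (M + (d (g 0) p + d (g' 0) p + K) / 2)) as [k0 Hk0].
  set (k := Nat.max (Nat.max N N') k0).
  assert (Hk : INR k0 <= INR k) by (apply le_INR; lia).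
  exists (Nat.max N N'); intros n m Hn Hm.
  assert (Hfar : rho d eps p (g (INR k)) (g' (INR k)) < e / 3).
  { apply HM; unfold gprod.
    pose proof (ray_dist_ge g (INR k) (bdry_ray xi g Hg) (pos_INR k)).
    pose proof (ray_dist_ge g' (INR k) (bdry_ray xi g' Hg') (pos_INR k)).
    pose proof (HK (INR k) (pos_INR k)); lra. }
  assert (Hxn : rho d eps p (x n) (g (INR k)) < e / 3) by (apply HM, HN; lia).
  assert (Hxm : rho d eps p (x' m) (g' (INR k)) < e / 3) by (apply HM, HN'; lia).
  pose proof (Hs (x n) (x' m) (g (INR k))); pose proof (Hs (x' m) (g (INR k)) (g' (INR k))).
  lra.
Qed.

Lemma rho_bd_exists (xi eta : bdry d) : exists r, rho_bd d eps p xi eta r.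
Proof.
  destruct (bdry_inhabited xi) as [g1 Hg1]; destruct (bdry_inhabited eta) as [g2 Hg2].
  pose proof (ray_conv_bd _ _ Hg1) as Hx; pose proof (ray_conv_bd _ _ Hg2) as Hy.
  set (x := fun n => g1 (INR n)) in Hx; set (y := fun n => g2 (INR n)) in Hy.
  assert (Hcauchy : Cauchy_crit (fun n => rho d eps p (x n) (y n))).
  { intros e He.
    destruct (conv_bd_rho_small _ _ _ Hx Hx (e / 2)) as [N1 H1]; [lra|].
    destruct (conv_bd_rho_small _ _ _ Hy Hy (e / 2)) as [N2 H2]; [lra|].
    exists (Nat.max N1 N2); intros n m Hn Hm; unfold Rdist.
    eapply Rle_lt_trans; [apply rho_sub_le|].
    specialize (H1 n m ltac:(lia) ltac:(lia)); specialize (H2 n m ltac:(lia) ltac:(lia)); lra. }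
  destruct (R_complete _ Hcauchy) as [r Hr]; exists r.
  intros x' y' Hx' Hy' e He.
  destruct (conv_bd_rho_small _ _ _ Hx' Hx (e / 3)) as [N1 H1]; [lra|].
  destruct (conv_bd_rho_small _ _ _ Hy' Hy (e / 3)) as [N2 H2]; [lra|].
  destruct (Hr (e / 3)) as [N3 H3]; [lra|].
  exists (Nat.max (Nat.max N1 N2) N3); intros n Hn.
  specialize (H1 n n ltac:(lia) ltac:(lia)); specialize (H2 n n ltac:(lia) ltac:(lia)).
  specialize (H3 n ltac:(lia)); unfold Rdist in *.
  pose proof (rho_sub_le (x' n) (y' n) (x n) (y n)).
  pose proof (Rabs_triang (rho d eps p (x' n) (y' n) - rho d eps p (x n) (y n))
                          (rho d eps p (x n) (y n) - r)) as Htri.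
  replace (rho d eps p (x' n) (y' n) - rho d eps p (x n) (y n) +
           (rho d eps p (x n) (y n) - r)) with (rho d eps p (x' n) (y' n) - r) in Htri by ring.
  lra.
Qed.

Lemma busemann_sub_le f1 f2 z1 z2 (xi1 xi2 eta1 eta2 : bdry d) b1 b2 r Rb :
  is_isometry d f1 -> is_isometry d f2 -> f1 z1 = p -> f2 z2 = p ->
  bd_act d f1 xi1 eta1 -> bd_act d f2 xi2 eta2 ->
  busemann d p eta1 (f1 p) b1 -> busemann d p eta2 (f2 p) b2 ->
  rho_bd d eps p xi1 xi2 r -> d z2 p <= Rb ->
  Rabs (b1 - b2) <= d z1 z2 + 2 * exp (eps * Rb) / eps * r.
Proof.
  intros Hf1 Hf2 Hz1 Hz2 Hact1 Hact2 Hbus1 Hbus2 Hr HRb.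
  destruct (bdry_inhabited xi1) as [g1 Hg1]; destruct (bdry_inhabited xi2) as [g2 Hg2].
  apply (Rabs_le_cv_lim
    (fun n => (d (g1 (INR n)) p - d (g1 (INR n)) z1) - (d (g2 (INR n)) p - d (g2 (INR n)) z2))
    (fun n => d z1 z2 + 2 * exp (eps * Rb) / eps * rho d eps p (g1 (INR n)) (g2 (INR n)))).
  - intros n; apply busemann_term_sub_le, HRb.
  - apply CV_minus; [apply (busemann_pullback f1 z1 xi1 eta1) |
                     apply (busemann_pullback f2 z2 xi2 eta2)]; assumption.
  - apply CV_plus, CV_mult; try apply Un_cv_const.
    apply Hr; apply ray_conv_bd; assumption.
Qed.

End StronglyHyperbolic.
End BasePoint.
End Metric.

Lemma compact_continuous_bounded {Y Z : Type} (dY : Y -> Y -> R) (dZ : Z -> Z -> R)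
  (f : Y -> Z) (z0 : Z) :
  is_metric dY -> is_metric dZ -> compact_space dY -> continuous_map dY dZ f ->
  exists B, forall y, dZ (f y) z0 <= B.
Proof.
  intros HdY HdZ Hcomp Hf.
  destruct (Hcomp nat (fun n y => dZ (f y) z0 < INR n)) as [l Hl].
  - intros n y Hy.
    destruct (Hf y (INR n - dZ (f y) z0)) as [del [Hdel Hball]]; [lra|].
    exists del; split; [exact Hdel|]; intros y' Hy'.
    rewrite (dist_sym dY HdY) in Hy'; specialize (Hball y' Hy').
    pose proof (dist_triangle dZ HdZ (f y') (f y) z0); lra.
  - intros y _; destruct (INR_unbounded (dZ (f y) z0)) as [n Hn]; exists n; lra.
  - exists (INR (list_max l)); intros y.
    destruct (Hl y I) as [n [Hn Hyn]].
    assert (Hmax : (n <= list_max l)%nat).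
    { pose proof (proj1 (list_max_le l _) (le_n _)) as Hall.
      rewrite Forall_forall in Hall; exact (Hall n Hn). }
    apply le_INR in Hmax; lra.
Qed.

Lemma orbit_continuous {O H : Type} (dO : O -> O -> R) (dH : H -> H -> R)
  (A : O -> H -> H) (p : H) :
  is_metric dH -> isom_cont_unif_bdd dO dH A -> continuous_map dO dH (fun o => A o p).
Proof.
  intros HdH Hcont o0 e He.
  destruct (Hcont (fun h => h = p)) with (o0 := o0) (eta := e) as [del [Hdel Hball]];
    [| exact He |].
  - exists p, 0; intros h ->; rewrite (dist_refl dH HdH); apply Rle_refl.
  - exists del; split; [exact Hdel|]; intros o Ho; exact (Hball o Ho p eq_refl).
Qed.

Theorem propositionA8 (Om : Type) (dOm : Om -> Om -> R)
  (H : Type) (dH : H -> H -> R) (eps : R) (p : H)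
  (T : Om -> Om) (A : Om -> H -> H) (al : Om -> bdry dH) (phi : Om -> R)
  (tau : R) :
  is_metric dOm -> compact_space dOm -> homeomorphism dOm T ->
  is_metric dH -> proper_space dH -> unique_geodesic_space dH ->
  gromov_hyperbolic dH -> unique_visibility dH ->
  0 < eps -> strongly_hyperbolic dH eps p ->
  (forall o, is_isometry dH (A o)) -> isom_cont_unif_bdd dOm dH A ->
  bd_continuous dOm dH eps p al ->
  (forall o, bd_act dH (A o) (al o) (al (T o))) ->
  (forall o, busemann dH p (al (T o)) (A o p) (- phi o)) ->
  0 < tau -> cocycle_holder dOm dH A tau -> bd_holder dOm dH eps p al tau ->
  real_holder dOm phi tau.
Proof.
  intros HdO Hcomp _ HdH _ _ _ _ Heps Hs Hisom Hcont _ Hact Hbus _ Hcoc [C2 Hal].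
  destruct (compact_continuous_bounded dOm dH (fun o => A o p) p HdO HdH Hcomp
              (orbit_continuous dOm dH A p HdH Hcont)) as [Rb HRb].
  destruct (Hcoc (fun h => dH p h <= Rb)) as [C1 HC1]; [exists p, Rb; tauto|].
  set (k := 2 * exp (eps * Rb) / eps).
  assert (Hk : 0 <= k).
  { apply Rlt_le, Rdiv_lt_0_compat; [pose proof (exp_pos (eps * Rb)); lra | exact Heps]. }
  exists (C1 + k * C2); intros o1 o2.
  destruct (Hisom o1) as [Hiso1 Hsurj1], (Hsurj1 p) as [z1 Hz1].
  destruct (Hisom o2) as [Hiso2 Hsurj2], (Hsurj2 p) as [z2 Hz2].
  assert (Hz2p : dH z2 p <= Rb) by (rewrite <- Hiso2, Hz2, (dist_sym dH HdH); apply HRb).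
  assert (Hz12 : dH z1 z2 <= C1 * hpow (dOm o1 o2) tau).
  { rewrite <- Hiso1, Hz1, <- Hz2 at 1; rewrite (dist_sym dH HdH).
    apply HC1; rewrite (dist_sym dH HdH); exact Hz2p. }
  destruct (rho_bd_exists dH HdH p eps Heps Hs (al o1) (al o2)) as [r Hr].
  assert (Hkr : k * r <= k * (C2 * hpow (dOm o1 o2) tau))
    by (apply Rmult_le_compat_l, Hal; assumption).
  pose proof (busemann_sub_le dH HdH p eps Heps Hs _ _ z1 z2 _ _ _ _ _ _ r Rb
                (Hisom o1) (Hisom o2) Hz1 Hz2 (Hact o1) (Hact o2) (Hbus o1) (Hbus o2)
                Hr Hz2p) as Hphi.
  replace (phi o1 - phi o2) with (- (- phi o1 - - phi o2)) by ring.
  rewrite Rabs_Ropp; fold k in Hphi; lra.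
Qed.
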